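(* Fix non-negative integers $t,a,b,c,u,e,f,g$ such that $t\ge 14$, $$10a+6b+3c+u+6e+3f+g\le\binom{t+2}{2},$$ and $(e,f,g)$ is one of the triples $(0,0,0),(0,0,1),(0,0,2),(0,1,0),(0,1,1),(0,1,2),(1,0,0),(1,0,1),(1,0,2),(1,1,0)$. Then $$6a+3b+c+10e+10f+10g\le\binom{t+1}{2}.$$ Moreover, if in addition $e+f+g\le 2$, the same conclusion holds for every $t\ge 12$; and if $e=f=g=0$, the conclusion holds for every $t\ge 3$. *)

From mathcomp Require Import all_boot.

Definition allowed_efg : seq (nat * nat * nat) :=
  [:: (0, 0, 0); (0, 0, 1); (0, 0, 2); (0, 1, 0); (0, 1, 1); (0, 1, 2);
      (1, 0, 0); (1, 0, 1); (1, 0, 2); (1, 1, 0)].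

From mathcomp Require Import all_boot.
From mathcomp Require Import zify.

(* Write X = 'C(t+1, 2), so that 'C(t+2, 2) = X + t + 1 and 2X = (t+1)t.
   The coefficients of the conclusion are at most 3/5 of those of the
   hypothesis (6 <= 3/5*10, 3 <= 3/5*6, 1 <= 3/5*3), hence
     5 (6a + 3b + c) <= 3 (10a + 6b + 3c) <= 3 (X + t + 1 - 6e - 3f - g).
   Adding 50 (e + f + g) shows that the conclusion follows as soon as
     3 (t + 1) + 32e + 41f + 47g <= (t + 1) t,                          (S)
   i.e. as soon as the slack (t+1)t - 3(t+1) absorbs the penalty
   32e + 41f + 47g of the triple (e, f, g). *)

Lemma bin2_double (n : nat) : 'C(n.+1, 2) * 2 = n.+1 * n.
Proof.
elim: n => [//|n IH].
by rewrite binS bin1 mulnDl IH; lia.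
Qed.

Definition penalty (e f g : nat) : nat := 32 * e + 41 * f + 47 * g.

Lemma conclusion_of_slack (t a b c u e f g : nat) :
  10 * a + 6 * b + 3 * c + u + 6 * e + 3 * f + g <= 'C(t.+2, 2) ->
  3 * t.+1 + penalty e f g <= t.+1 * t ->
  6 * a + 3 * b + c + 10 * e + 10 * f + 10 * g <= 'C(t.+1, 2).
Proof.
rewrite /penalty binS bin1 => hyp slack.
have coeffs : 5 * (6 * a + 3 * b + c) <= 3 * (10 * a + 6 * b + 3 * c) by lia.
have := bin2_double t.
lia.
Qed.

Lemma penalty_allowed (e f g : nat) : (e, f, g) \in allowed_efg ->
  penalty e f g <= 135 /\ (e + f + g <= 2 -> penalty e f g <= 94).
Proof.
rewrite !inE.
by repeat case/orP=> [/eqP[-> -> ->]|]; last move/eqP=> [-> -> ->].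
Qed.

(* The slack (t+1)t - 3(t+1) is nondecreasing in t, so (S) only has to be
   checked at the threshold values t0 = 14, 12, 3. *)
Lemma slack_bound (t t0 w : nat) :
  t0 <= t -> 3 * t0.+1 + w <= t0.+1 * t0 -> 3 * t.+1 + w <= t.+1 * t.
Proof. by move=> /subnKC <-; set d := t - t0; nia. Qed.

Theorem lemma2p6 (t a b c u e f g : nat) :
  (e, f, g) \in allowed_efg ->
  10 * a + 6 * b + 3 * c + u + 6 * e + 3 * f + g <= 'C(t.+2, 2) ->
  ((14 <= t -> 6 * a + 3 * b + c + 10 * e + 10 * f + 10 * g <= 'C(t.+1, 2))
   /\ (e + f + g <= 2 -> 12 <= t ->
       6 * a + 3 * b + c + 10 * e + 10 * f + 10 * g <= 'C(t.+1, 2))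
   /\ (e = 0 -> f = 0 -> g = 0 -> 3 <= t ->
       6 * a + 3 * b + c + 10 * e + 10 * f + 10 * g <= 'C(t.+1, 2))).
Proof.
move=> /penalty_allowed [pen_all pen_small] /conclusion_of_slack from_slack.
split; [|split] => [t14 | small t12 | e0 f0 g0 t3]; apply: from_slack.
- by apply: slack_bound t14 _; lia.
- by apply: slack_bound t12 _; have := pen_small small; lia.
- by apply: slack_bound t3 _; rewrite e0 f0 g0.
Qed.
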